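(* Let $q\ge 4$ and let $H_1$ be a hyperplane of $\mathrm{PG}(U_1)$ with $|H_1\cap\mathcal O_1|=q^2-q+1$. Then every twisted cubic of $\mathcal O_1$ meets $H_1$ in at most three points.
   Context: $q$ is a prime power. Let $U_1\subset\mathbb F_{q^3}^8$ be the set of vectors $(a,b^{q^2},b^{q},c,b,c^{q},c^{q^2},d)$ with $a,d\in\mathbb F_q$, $b,c\in\mathbb F_{q^3}$; it is an $8$-dimensional $\mathbb F_q$-vector space, so $\mathrm{PG}(U_1)\cong\mathrm{PG}(7,q)$. For $(a,b,c,d)\ne 0$ let $P(a,b,c,d)$ be the point of $\mathrm{PG}(U_1)$ spanned by this vector. Let $\mathcal O_1=\{P(1,t,t^{q^2+q},t^{q^2+q+1}) : t\in\mathbb F_{q^3}\}\cup\{P(0,0,0,1)\}$. Let $\theta:\mathrm{PG}(1,q^3)\to\mathcal O_1$ be the bijection $\langle(1,t)\rangle\mapsto P(1,t,t^{q^2+q},t^{q^2+q+1})$, $\langle(0,1)\rangle\mapsto P(0,0,0,1)$. A $q$-order subline of $\mathrm{PG}(1,q^3)$ is the image of $\mathrm{PG}(1,q)=\{\langle(1,t)\rangle:t\in\mathbb F_q\}\cup\{\langle(0,1)\rangle\}$ under an element of $\mathrm{PGL}(2,q^3)$; the sets $\theta(L)$ are twisted cubics (each spanning a solid), called the twisted cubics of $\mathcal O_1$. *)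

From HB Require Import structures.
From mathcomp Require Import all_boot all_order all_algebra all_field.
Set Implicit Arguments. Unset Strict Implicit. Unset Printing Implicit Defensive.
Import GRing.Theory.
Local Open Scope ring_scope.

(* F plays the role of F_{q^3}; F_q is realised as {x in F | x^q = x}. *)
Section Defs.
Variables (F : finFieldType) (q : nat).

Definition inFq (x : F) : bool := x ^+ q == x.

Definition U1vec (a b c d : F) : 'rV[F]_8 :=
  \row_(i < 8) nth 0 [:: a; b ^+ (q ^ 2); b ^+ q; c; b; c ^+ q; c ^+ (q ^ 2); d] i.

Definition inU1 (v : 'rV[F]_8) : Prop :=
  exists a b c d, [/\ inFq a, inFq d & v = U1vec a b c d].

(* f is a nonzero F_q-linear functional U_1 -> F_q; its kernel defines the
   hyperplane H = { <v> : v in U_1 \ 0, f v = 0 } of PG(U_1). *)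
Definition hyperplane_functional (f : 'rV[F]_8 -> F) : Prop :=
  [/\ (forall u v, inU1 u -> inU1 v -> f (u + v) = f u + f v),
      (forall (l : F) u, inFq l -> inU1 u -> f (l *: u) = l * f u),
      (forall u, inU1 u -> inFq (f u))
    & exists u, inU1 u /\ f u != 0].

(* PG(1,q^3) as option F : Some t = <(1,t)>, None = <(0,1)> *)
Definition hom (x : option F) : 'rV[F]_2 :=
  match x with Some t => \row_(i < 2) (if i == 0 :> nat then 1 else t)
             | None => \row_(i < 2) (if i == 0 :> nat then 0 else 1) end.

Definition dehom (v : 'rV[F]_2) : option F :=
  if v 0 0 != 0 then Some (v 0 1 / v 0 0) else None.

Definition pgl_act (M : 'M[F]_2) (x : option F) : option F := dehom (hom x *m M).

Definition PG1q : {set option F} :=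
  [set x : option F | if x is Some t then inFq t else true].

Definition subline (M : 'M[F]_2) : {set option F} := pgl_act M @: PG1q.

Definition theta (x : option F) : 'rV[F]_8 :=
  match x with
  | Some t => U1vec 1 t (t ^+ (q ^ 2 + q)) (t ^+ (q ^ 2 + q + 1))
  | None => U1vec 0 0 0 1
  end.

(* H_1 meets O_1 in #|[set x | theta x in H]| points (theta is a bijection) *)
Definition meetO1 (f : 'rV[F]_8 -> F) : {set option F} :=
  [set x : option F | f (theta x) == 0].

End Defs.

From Pilot Require Import Defs.
From HB Require Import structures.
From mathcomp Require Import all_boot all_order all_algebra all_field.
From mathcomp Require Import ring.
(* Defs.hom is shadowed by vector.hom. *)
Import Defs.
Set Implicit Arguments. Unset Strict Implicit. Unset Printing Implicit Defensive.
Import GRing.Theory.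
Local Open Scope ring_scope.

(* A point <(y0, y1)> of PG(1,q^3) lies in H_1 iff [ftheta y0 y1 = 0], where [ftheta]
   is f applied to the lift of theta; [ftheta (l y0) (l y1) = N(l) ftheta y0 y1].
   Along the subline <y + t z>, t in F_q U {oo}, [ftheta] is a cubic in t, so a
   subline with four points in H_1 kills all its coefficients. Then on the whole
   line [ftheta (y + t z) = L t + phi (t^(q+1))] with F_q-linear L, phi vanishing
   at 1. Such a form is affine with slope [phi (t + t^q)] along each coset t + F_q,
   which gives it at least q^2 zeros, so H_1 would meet O_1 in more than
   q^2 - q + 1 points. *)

Lemma card_roots_lt_size (R : finIdomainType) (p : {poly R}) :
  p != 0 -> (#|[set x | root p x]| < size p)%N.
Proof.
move=> p0; rewrite cardE; apply: max_poly_roots => //; last exact: enum_uniq.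
by apply/allP => x; rewrite mem_enum inE.
Qed.

(* [x = None] is the point at infinity, a root when the coefficient of
   degree [n] of the homogenised form vanishes. *)
Definition proj_root (R : nzRingType) (n : nat) (p : {poly R}) (x : option R) :=
  if x is Some s then root p s else p`_n == 0.

Lemma card_proj_roots (R : finIdomainType) n (p : {poly R}) :
  p != 0 -> (size p <= n.+1)%N -> (#|[set x | proj_root n p x]| <= n)%N.
Proof.
move=> p0 szp; have roots_lt := card_roots_lt_size p0.
have card_Some : #|Some @: [set s | root p s]| = #|[set s | root p s]|.
  by apply: card_imset => ? ? [].
have [pn0|pn] := eqVneq p`_n 0.
  have szn : (size p <= n)%N.
    move: szp; rewrite leq_eqVlt ltnS => /orP[/eqP szp|//].
    by move/eqP: pn0; rewrite -[n]/(n.+1.-1) -szp -lead_coefE lead_coef_eq0 (negbTE p0).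
  have sub : [set x | proj_root n p x] \subset None |: Some @: [set s | root p s].
    apply/subsetP => -[s|]; rewrite !inE //= => rs.
    by rewrite imset_f ?inE.
  apply: leq_trans (subset_leq_card sub) _.
  rewrite cardsU1 card_Some; apply: leq_trans (leq_add (leq_b1 _) (leqnn _)) _.
  by rewrite add1n (leq_trans roots_lt).
have sub : [set x | proj_root n p x] \subset Some @: [set s | root p s].
  apply/subsetP => -[s|]; rewrite !inE /= ?(negbTE pn) // => rs.
  by rewrite imset_f ?inE.
by apply: leq_trans (subset_leq_card sub) _; rewrite card_Some -ltnS (leq_trans roots_lt).
Qed.

Lemma exprD_prime_power (F : finFieldType) (p k n : nat) : prime p ->
  #|F| = (p ^ n)%N -> forall x y : F, (x + y) ^+ (p ^ k) = x ^+ (p ^ k) + y ^+ (p ^ k).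
Proof.
move=> pp cardF x y; apply: exprDn_pchar.
by rewrite pnatX (pnatE _ pp) (card_finPcharP cardF pp).
Qed.

Section ProjectiveLine.
Variable F : finFieldType.
Implicit Types (x : option F) (M : 'M[F]_2) (v : 'rV[F]_2).

Lemma homM x M j : (hom x *m M) 0 j = if x is Some t then M 0 j + t * M 1 j else M 1 j.
Proof.
case: x => [t|]; rewrite mxE !big_ord_recr big_ord0 /= !mxE /= add0r.
  by rewrite mul1r; congr (M _ _ + t * M _ _); apply: val_inj.
by rewrite mul0r add0r mul1r; congr (M _ _); apply: val_inj.
Qed.

Lemma hom_neq0 x : hom x != 0.
Proof.
apply/negP => /eqP /rowP h; case: x h => [t|] h.
  by have := h 0; rewrite !mxE /= => /eqP; rewrite oner_eq0.
by have := h 1; rewrite !mxE /= => /eqP; rewrite oner_eq0.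
Qed.

Lemma homM_neq0 x M : M \in unitmx -> hom x *m M != 0.
Proof.
move=> uM; apply: contra (hom_neq0 x) => /eqP h.
by rewrite -(mulmxK uM (hom x)) h mul0mx.
Qed.

Lemma rowv_eq0 v : v 0 0 = 0 -> v 0 1 = 0 -> v = 0.
Proof.
move=> h0 h1; apply/rowP => i; rewrite mxE.
by case: i => [[|[|i]] hi] //=; [rewrite -h0 | rewrite -h1]; congr (v _ _); apply: val_inj.
Qed.

Lemma dehom_hom x : dehom (hom x) = x.
Proof. by rewrite /dehom; case: x => [t|]; rewrite !mxE /= ?oner_eq0 ?eqxx //= divr1. Qed.

Lemma dehom_scale (c : F) v : c != 0 -> dehom (c *: v) = dehom v.
Proof.
move=> c0; rewrite /dehom !mxE mulf_eq0 (negbTE c0) /=.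
by case: ifP => // _; congr Some; rewrite invfM mulrACA mulfV // mul1r.
Qed.

Lemma hom_dehom v : v != 0 -> exists2 c, c != 0 & hom (dehom v) = c *: v.
Proof.
move=> v0; rewrite /dehom; case: ifP => [h0|/negbFE/eqP h0].
  exists (v 0 0)^-1; first by rewrite invr_eq0.
  apply/rowP => i; rewrite !mxE; case: i => [[|[|i]] hi] //=.
    by rewrite (_ : Ordinal hi = 0) ?mulVf //; apply: val_inj.
  by rewrite mulrC (_ : Ordinal hi = 1) //; apply: val_inj.
have h1 : v 0 1 != 0 by apply: contra v0 => /eqP h1; rewrite (rowv_eq0 h0 h1).
exists (v 0 1)^-1; first by rewrite invr_eq0.
apply/rowP => i; rewrite !mxE; case: i => [[|[|i]] hi] //=.
  by rewrite (_ : Ordinal hi = 0) ?h0 ?mulr0 //; apply: val_inj.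
by rewrite (_ : Ordinal hi = 1) ?mulVf //; apply: val_inj.
Qed.

Lemma pgl_actK M : M \in unitmx -> cancel (pgl_act M) (pgl_act (invmx M)).
Proof.
move=> uM x; rewrite /pgl_act.
have [c c0 ->] := hom_dehom (homM_neq0 x uM).
by rewrite -scalemxAl mulmxK // dehom_scale // dehom_hom.
Qed.

End ProjectiveLine.

Section Frobenius.
Variables (F : finFieldType) (q : nat).
Hypothesis card_F : #|F| = (q ^ 3)%N.
Hypothesis q_gt1 : (1 < q)%N.
Hypothesis exprDq : forall x y : F, (x + y) ^+ q = x ^+ q + y ^+ q.

Definition frob (x : F) := x ^+ q.

Lemma frobD x y : frob (x + y) = frob x + frob y. Proof. exact: exprDq. Qed.
Lemma frobM x y : frob (x * y) = frob x * frob y. Proof. exact: exprMn. Qed.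
Lemma frobV x : frob x^-1 = (frob x)^-1. Proof. exact: exprVn. Qed.
Lemma frob1 : frob 1 = 1. Proof. exact: expr1n. Qed.
Lemma frob_eq0 x : (frob x == 0) = (x == 0).
Proof. by rewrite /frob expf_eq0 (ltnW q_gt1). Qed.
Lemma frob0 : frob 0 = 0. Proof. by apply/eqP; rewrite frob_eq0. Qed.
Lemma frobN x : frob (- x) = - frob x.
Proof. by apply/eqP; rewrite -subr_eq0 opprK -frobD addNr frob0. Qed.
Lemma frob2E x : frob (frob x) = x ^+ (q ^ 2). Proof. by rewrite /frob -exprM mulnn. Qed.
Lemma frob3 x : frob (frob (frob x)) = x.
Proof.
rewrite /frob -!exprM -[RHS]expf_card card_F.
by rewrite !expnS expn0 muln1.
Qed.

Definition Fq : {set F} := [set x | frob x == x].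
Definition trace x := x + frob x + frob (frob x).
Definition norm x := x * frob x * frob (frob x).

Lemma trace_Fq x : frob (trace x) = trace x.
Proof. by rewrite /trace !frobD frob3; ring. Qed.
Lemma norm_Fq x : frob (norm x) = norm x.
Proof. by rewrite /norm !frobM frob3; ring. Qed.
Lemma norm_eq0 x : (norm x == 0) = (x == 0).
Proof. by rewrite /norm !mulf_eq0 !frob_eq0 !orbb. Qed.

Definition zeros (h : F -> F) : {set F} := [set t | h t == 0].

Definition Fq_linear (h : F -> F) :=
  [/\ {morph h : x y / x + y}, forall l x, frob l = l -> h (l * x) = l * h x
    & forall x, frob (h x) = h x].

Lemma trace_Fq_linear : Fq_linear trace.
Proof.
split=> [x y|l x hl|x]; last exact: trace_Fq.
  by rewrite /trace !frobD; ring.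
by rewrite /trace !frobM !hl; ring.
Qed.

Section FqLinear.
Variable h : F -> F.
Hypothesis h_lin : Fq_linear h.

Lemma Fq_linearD : {morph h : x y / x + y}. Proof. by case: h_lin. Qed.
Lemma Fq_linearZ l x : frob l = l -> h (l * x) = l * h x.
Proof. by case: h_lin => _ hZ _; apply: hZ. Qed.
Lemma frob_Fq_linear x : frob (h x) = h x. Proof. by case: h_lin. Qed.

Lemma Fq_linear0 : h 0 = 0.
Proof. by apply: (@addrI _ (h 0)); rewrite -Fq_linearD !addr0. Qed.

Lemma Fq_linearB x y : h (x - y) = h x - h y.
Proof. by apply: (@addIr _ (h y)); rewrite -Fq_linearD !subrK. Qed.

Lemma Fq_linear_Fq s : frob s = s -> h s = s * h 1.
Proof. by move=> hs; rewrite -Fq_linearZ ?mulr1. Qed.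

(* With [h u = 1], [(k, c) |-> k + c * u] is a bijection [zeros h * Fq -> F]. *)
Lemma card_kernel_mul_Fq t0 : h t0 != 0 ->
  (#|zeros h| * #|Fq| = #|F|)%N.
Proof.
move=> ht0; set u := (h t0)^-1 * t0.
have hu : h u = 1 by rewrite /u Fq_linearZ ?mulVf // frobV frob_Fq_linear.
pose join (kc : F * F) := kc.1 + kc.2 * u.
have hjoin kc : kc \in setX (zeros h) Fq -> h (join kc) = kc.2.
  case: kc => k c; rewrite !inE /= => /andP[/eqP hk /eqP hc].
  by rewrite Fq_linearD hk Fq_linearZ // hu mulr1 add0r.
rewrite -cardsX -(card_in_imset (f := join)).
  rewrite -cardsT; apply: eq_card => t; rewrite !inE; apply/imsetP.
  exists (t - h t * u, h t); last by rewrite /join /= subrK.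
  by rewrite !inE /= Fq_linearB Fq_linearZ ?frob_Fq_linear // hu mulr1 subrr !eqxx.
move=> [k c] [k' c'] hkc hkc' e.
have ec : c = c' by move: (hjoin _ hkc) (hjoin _ hkc'); rewrite e /= => ->.
by move: e; rewrite /join /= ec => /addIr ->.
Qed.

End FqLinear.

Lemma card_Fq_le : (#|Fq| <= q)%N.
Proof.
have sz : size ('X^q - 'X : {poly F}) = q.+1.
  by rewrite size_polyDl size_polyXn // size_polyN size_polyX ltnS.
have p0 : ('X^q - 'X : {poly F}) != 0 by rewrite -size_poly_eq0 sz.
rewrite -ltnS -sz; apply: leq_ltn_trans (card_roots_lt_size p0).
apply: subset_leq_card; apply/subsetP => x.
by rewrite !inE /root !hornerE subr_eq0.
Qed.

Lemma card_zeros_trace_le : (#|zeros trace| <= q ^ 2)%N.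
Proof.
have q_lt_q2 : (q < q ^ 2)%N by rewrite -mulnn -{1}(muln1 q) ltn_pmul2l ?(ltnW q_gt1).
have sz : size ('X^(q ^ 2) + 'X^q + 'X : {poly F}) = (q ^ 2).+1.
  rewrite size_polyDl !size_polyDl ?size_polyXn ?size_polyX // ?ltnS //.
  exact: leq_trans q_gt1 (ltnW _).
have p0 : ('X^(q ^ 2) + 'X^q + 'X : {poly F}) != 0 by rewrite -size_poly_eq0 sz.
rewrite -ltnS -sz; apply: leq_ltn_trans (card_roots_lt_size p0).
apply: subset_leq_card; apply/subsetP => x.
rewrite !inE /root !hornerE /trace frob2E /frob => /eqP tr0.
by apply/eqP; rewrite -tr0; ring.
Qed.

Lemma card_Fq : #|Fq| = q.
Proof.
have [t0 t0_tr] : exists t0, trace t0 != 0.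
  apply/existsP; apply: contraTT card_zeros_trace_le => /existsPn tr0.
  have -> : zeros trace = setT by apply/setP => t; rewrite !inE; have := tr0 t; case: eqP.
  by rewrite cardsT card_F -ltnNge ltn_exp2l.
have := card_kernel_mul_Fq trace_Fq_linear t0_tr; rewrite card_F => cardF.
apply/eqP; rewrite eqn_leq card_Fq_le leqNgt; apply/negP => Fq_lt.
have : (#|zeros trace| * #|Fq| < q ^ 3)%N.
  apply: leq_ltn_trans (leq_mul card_zeros_trace_le (leqnn _)) _.
  by rewrite [X in (_ < X)%N]expnSr ltn_pmul2l // expn_gt0 (ltnW q_gt1).
by rewrite cardF ltnn.
Qed.

Lemma card_zeros_Fq_linear h t0 : Fq_linear h -> h t0 != 0 -> #|zeros h| = (q ^ 2)%N.
Proof.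
move=> h_lin ht0; have := card_kernel_mul_Fq h_lin ht0.
rewrite card_Fq card_F expnSr => /eqP.
by rewrite eqn_pmul2r ?(ltnW q_gt1) // => /eqP.
Qed.

Lemma card_zeros_Fq_linear_ge h : Fq_linear h -> (q ^ 2 <= #|zeros h|)%N.
Proof.
move=> h_lin; have [t0 ht0|h0] := pickP (fun t => h t != 0).
  by rewrite (card_zeros_Fq_linear h_lin ht0).
have -> : zeros h = setT by apply/setP => t; rewrite !inE; have := h0 t; case: eqP.
by rewrite cardsT card_F leq_exp2l.
Qed.

Section QuadraticZeros.
Variables L phi : F -> F.
Hypotheses (L_lin : Fq_linear L) (phi_lin : Fq_linear phi).
Hypotheses (L1 : L 1 = 0) (phi1 : phi 1 = 0).

Let Q t := L t + phi (t * frob t).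
Let ell t := phi (t + frob t).

Let ell_Fq_linear : Fq_linear ell.
Proof.
split=> [x y|l x hl|x]; rewrite /ell.
- by rewrite frobD -(Fq_linearD phi_lin); congr phi; ring.
- by rewrite frobM hl -(Fq_linearZ phi_lin) //; congr phi; ring.
- exact: frob_Fq_linear.
Qed.

Let ell_Fq s : frob s = s -> ell s = 0.
Proof.
move=> hs; rewrite (Fq_linear_Fq ell_Fq_linear hs) /ell frob1 (Fq_linearD phi_lin).
by rewrite phi1 addr0 mulr0.
Qed.

Let Q_shift t s : frob s = s -> Q (t + s) = Q t + s * ell t.
Proof.
move=> hs; rewrite /Q.
have -> : (t + s) * frob (t + s) = t * frob t + (s * (t + frob t) + s * s * 1).
  by rewrite frobD hs; ring.
rewrite (Fq_linearD L_lin) (Fq_linear_Fq L_lin hs) L1 mulr0 addr0 !(Fq_linearD phi_lin).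
rewrite (Fq_linearZ phi_lin (l := s)) // (Fq_linearZ phi_lin (l := s * s)) ?frobM ?hs //.
by rewrite phi1 mulr0 addr0 addrA.
Qed.

Let Fq_sub_zeros : Fq \subset zeros Q :&: zeros ell.
Proof.
apply/subsetP => s; rewrite !inE => /eqP hs; rewrite ell_Fq // eqxx andbT.
rewrite -[s]add0r Q_shift // ell_Fq ?frob0 // mulr0 addr0 /Q mul0r.
by rewrite (Fq_linear0 L_lin) (Fq_linear0 phi_lin) addr0.
Qed.

(* Off the kernel of [ell], each coset [t + Fq] contains exactly one zero of [Q]. *)
Let card_zeros_off_kernel t0 : ell t0 != 0 -> (q ^ 2 - q <= #|zeros Q :\: zeros ell|)%N.
Proof.
move=> ht0.
pose m t := (t - Q t / ell t, Q t / ell t).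
have m_inj : injective m by move=> x y /(congr1 (fun p => p.1 + p.2)); rewrite /= !subrK.
have m_sub : m @: (~: zeros ell) \subset setX (zeros Q :\: zeros ell) Fq.
  apply/subsetP => _ /imsetP[t + ->]; rewrite !inE /= => ht.
  have hc : frob (Q t / ell t) = Q t / ell t.
    rewrite frobM frobV (frob_Fq_linear ell_Fq_linear) /Q frobD.
    by rewrite (frob_Fq_linear L_lin) (frob_Fq_linear phi_lin).
  have hc' : frob (- (Q t / ell t)) = - (Q t / ell t) by rewrite frobN hc.
  rewrite hc eqxx andbT Q_shift // mulNr divfK // subrr eqxx andbT.
  by rewrite (Fq_linearB ell_Fq_linear) (ell_Fq hc) subr0.
have card_off : #|~: zeros ell| = ((q ^ 2 - q) * q)%N.
  rewrite mulnBl -expnSr mulnn -card_F -(card_zeros_Fq_linear ell_Fq_linear ht0).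
  by rewrite -(cardsC (zeros ell)) addKn.
have := subset_leq_card m_sub; rewrite card_imset // cardsX card_Fq card_off.
by rewrite leq_pmul2r // (ltnW q_gt1).
Qed.

Let phi_eq0 : (forall t, ell t = 0) -> forall x, phi x = 0.
Proof.
move=> ell0 x; have -> : x = trace x * 1 - (frob x + frob (frob x)) by rewrite /trace; ring.
rewrite (Fq_linearB phi_lin) (Fq_linearZ phi_lin) ?trace_Fq // phi1 mulr0.
by rewrite -/(ell (frob x)) ell0 subr0.
Qed.

Lemma card_zeros_quadratic_ge : (q ^ 2 <= #|zeros (fun t => L t + phi (t * frob t))%R|)%N.
Proof.
have [t0 ht0|ell0] := pickP (fun t => ell t != 0).
  rewrite -(cardsID (zeros ell)).
  apply: leq_trans (leq_add (subset_leq_card Fq_sub_zeros) (card_zeros_off_kernel ht0)).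
  by rewrite card_Fq subnKC // -mulnn leq_pmulr // ltnW.
have -> : zeros Q = zeros L.
  apply/setP => t; rewrite !inE /Q phi_eq0 ?addr0 // => s.
  by have := ell0 s; rewrite /= => /negbFE/eqP.
exact: card_zeros_Fq_linear_ge.
Qed.
End QuadraticZeros.

Section Hyperplane.
Variable f : 'rV[F]_8 -> F.
Hypothesis f_hyp : hyperplane_functional q f.
Implicit Types a b c d l t y z : F.

Lemma U1vecE a b c d : U1vec q a b c d =
  \row_(i < 8) nth 0 [:: a; frob (frob b); frob b; c; b; frob c; frob (frob c); d] i.
Proof. by rewrite /U1vec !frob2E. Qed.

Lemma U1vecD a b c d a' b' c' d' :
  U1vec q a b c d + U1vec q a' b' c' d' = U1vec q (a + a') (b + b') (c + c') (d + d').
Proof.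
rewrite !U1vecE; apply/rowP => i; rewrite !mxE.
by case: i => [[|[|[|[|[|[|[|[|i]]]]]]]] hi] //=; rewrite ?frobD ?addr0.
Qed.

Lemma U1vecZ l a b c d : frob l = l ->
  l *: U1vec q a b c d = U1vec q (l * a) (l * b) (l * c) (l * d).
Proof.
move=> hl; rewrite !U1vecE; apply/rowP => i; rewrite !mxE.
by case: i => [[|[|[|[|[|[|[|[|i]]]]]]]] hi] //=; rewrite ?frobM ?hl ?mulr0.
Qed.

Lemma inU1_U1vec a b c d : frob a = a -> frob d = d -> inU1 q (U1vec q a b c d).
Proof. by move=> ha hd; exists a, b, c, d; split => //; apply/eqP. Qed.

Definition fU1 a b c d := f (U1vec q a b c d).

Lemma fU1D a b c d a' b' c' d' :
  frob a = a -> frob d = d -> frob a' = a' -> frob d' = d' ->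
  fU1 a b c d + fU1 a' b' c' d' = fU1 (a + a') (b + b') (c + c') (d + d').
Proof.
case: f_hyp => fD _ _ _ ha hd ha' hd'.
by rewrite /fU1 -U1vecD fD //; apply: inU1_U1vec.
Qed.

Lemma fU1Z l a b c d : frob l = l -> frob a = a -> frob d = d ->
  fU1 (l * a) (l * b) (l * c) (l * d) = l * fU1 a b c d.
Proof.
case: f_hyp => _ fZ _ _ hl ha hd.
by rewrite /fU1 -U1vecZ // fZ //; [apply/eqP | apply: inU1_U1vec].
Qed.

Lemma frob_fU1 a b c d : frob a = a -> frob d = d -> frob (fU1 a b c d) = fU1 a b c d.
Proof. by case: f_hyp => _ _ fF _ ha hd; apply/eqP/fF/inU1_U1vec. Qed.

(* [ftheta y0 y1] is [f] at the homogeneous lift of [theta <(y0, y1)>]. *)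
Definition ftheta y0 y1 :=
  fU1 (norm y0) (frob (frob y0) * frob y0 * y1) (y0 * frob (frob y1) * frob y1) (norm y1).

Lemma ftheta_scale l y0 y1 : ftheta (l * y0) (l * y1) = norm l * ftheta y0 y1.
Proof. by rewrite /ftheta -fU1Z ?norm_Fq //; congr fU1; rewrite /norm !frobM; ring. Qed.

Definition semilin (P Q R x : F) := x * P + frob x * Q + frob (frob x) * R.

Definition fU1_semilin a P Q R P' Q' R' d x :=
  fU1 (trace (x * a)) (semilin P Q R x) (semilin P' Q' R' x) (trace (x * d)).

Lemma fU1_semilin_Fq_linear a P Q R P' Q' R' d :
  Fq_linear (fU1_semilin a P Q R P' Q' R' d).
Proof.
split=> [x y|l x hl|x]; rewrite /fU1_semilin.
- rewrite fU1D ?trace_Fq //; congr fU1;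
    by rewrite ?(mulrDl, Fq_linearD trace_Fq_linear) // /semilin !frobD; ring.
- rewrite -fU1Z ?trace_Fq //; congr fU1;
    by rewrite -?(Fq_linearZ trace_Fq_linear) ?mulrA // /semilin !frobM !hl; ring.
- exact: frob_fU1 (trace_Fq _) (trace_Fq _).
Qed.

(* The terms of [ftheta (y + t z)] of degree one in [t], resp. in [t * frob t]. *)
Definition polar1 y0 y1 z0 z1 :=
  fU1_semilin (z0 * frob y0 * frob (frob y0))
    (frob (frob y0) * frob y0 * z1) (frob (frob y0) * frob z0 * y1) (frob (frob z0) * frob y0 * y1)
    (z0 * frob (frob y1) * frob y1) (y0 * frob (frob y1) * frob z1) (y0 * frob (frob z1) * frob y1)
    (z1 * frob y1 * frob (frob y1)).
Definition polar2 y0 y1 z0 z1 :=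
  fU1_semilin (z0 * frob z0 * frob (frob y0))
    (frob (frob y0) * frob z0 * z1) (frob (frob z0) * frob z0 * y1) (frob (frob z0) * frob y0 * z1)
    (z0 * frob (frob y1) * frob z1) (y0 * frob (frob z1) * frob z1) (z0 * frob (frob z1) * frob y1)
    (z1 * frob z1 * frob (frob y1)).

Lemma polar1_Fq_linear y0 y1 z0 z1 : Fq_linear (polar1 y0 y1 z0 z1).
Proof. exact: fU1_semilin_Fq_linear. Qed.

Lemma polar2_Fq_linear y0 y1 z0 z1 : Fq_linear (polar2 y0 y1 z0 z1).
Proof. exact: fU1_semilin_Fq_linear. Qed.

Lemma ftheta_expand y0 y1 z0 z1 t :
  ftheta (y0 + t * z0) (y1 + t * z1) =
  ftheta y0 y1 + polar1 y0 y1 z0 z1 t + polar2 y0 y1 z0 z1 (t * frob t) + norm t * ftheta z0 z1.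
Proof.
rewrite /ftheta /polar1 /polar2 /fU1_semilin -fU1Z ?norm_Fq // !fU1D;
  rewrite ?(frobD, frobM, trace_Fq, norm_Fq) //.
by congr fU1; rewrite /trace /semilin /norm !(frobD, frobM, frob3); ring.
Qed.

Lemma f_theta_Some t : f (theta q (Some t)) = ftheta 1 t.
Proof.
rewrite /theta /ftheta /fU1 /norm !frob1 !frob2E /frob !exprD expr1.
by congr (f (U1vec _ _ _ _ _)); ring.
Qed.

Lemma f_theta_None : f (theta q None) = ftheta 0 1.
Proof. by rewrite /theta /ftheta /fU1 /norm !(frob0, frob1, mulr0, mul0r, mulr1). Qed.

Lemma f_theta_dehom (v : 'rV[F]_2) : v != 0 ->
  (f (theta q (dehom v)) == 0) = (ftheta (v 0 0) (v 0 1) == 0).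
Proof.
move=> v0; rewrite /dehom; case: ifP => [h0|/negbFE/eqP h0].
  have -> : ftheta (v 0 0) (v 0 1) = ftheta (v 0 0 * 1) (v 0 0 * (v 0 1 / v 0 0)).
    by rewrite mulr1 mulrC divfK.
  by rewrite f_theta_Some ftheta_scale mulf_eq0 norm_eq0 (negbTE h0).
have h1 : v 0 1 != 0 by apply: contra v0 => /eqP h1; rewrite (rowv_eq0 h0 h1).
rewrite f_theta_None h0.
have -> : ftheta 0 (v 0 1) = ftheta (v 0 1 * 0) (v 0 1 * 1) by rewrite mulr0 mulr1.
by rewrite ftheta_scale mulf_eq0 norm_eq0 (negbTE h1).
Qed.

Lemma meetO1_pgl_act M x : M \in unitmx ->
  (pgl_act M x \in meetO1 q f) = (ftheta ((hom x *m M) 0 0) ((hom x *m M) 0 1) == 0).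
Proof. by move=> uM; rewrite inE /pgl_act f_theta_dehom // homM_neq0. Qed.

(* For [s] in [Fq], [ftheta] at the image of [s] under [M] is the cubic
   [subline_poly M] at [s]; its coefficient of degree 3 is the value at [None]. *)
Definition subline_poly (M : 'M[F]_2) : {poly F} :=
  Poly [:: ftheta (M 0 0) (M 0 1); polar1 (M 0 0) (M 0 1) (M 1 0) (M 1 1) 1;
           polar2 (M 0 0) (M 0 1) (M 1 0) (M 1 1) 1; ftheta (M 1 0) (M 1 1)].

Lemma meetO1_subline M x : M \in unitmx -> x \in PG1q F q ->
  (pgl_act M x \in meetO1 q f) = proj_root 3 (subline_poly M) x.
Proof.
move=> uM; rewrite meetO1_pgl_act // !homM inE /=; case: x => [s /eqP hs|_] /=.
  have {}hs : frob s = s := hs.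
  rewrite ftheta_expand /root horner_Poly /= /norm !hs.
  rewrite (Fq_linear_Fq (polar1_Fq_linear _ _ _ _) hs).
  rewrite (Fq_linear_Fq (polar2_Fq_linear _ _ _ _) (s := s * s)) ?frobM ?hs //.
  by congr (_ == 0); ring.
by rewrite coef_Poly.
Qed.

Lemma card_subline_meetO1_le M : M \in unitmx ->
  (#|subline q M :&: meetO1 q f| <= #|[set x | proj_root 3 (subline_poly M) x]|)%N.
Proof.
move=> uM; set R := [set x | proj_root 3 (subline_poly M) x].
have sub : subline q M :&: meetO1 q f \subset pgl_act M @: R.
  apply/subsetP => _ /setIP[/imsetP[x PGx ->]]; rewrite meetO1_subline // => Rx.
  by rewrite imset_f ?inE.
exact: leq_trans (subset_leq_card sub) (leq_imset_card _ _).
Qed.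

Lemma subline_poly_neq0 M : M \in unitmx ->
  #|meetO1 q f| = (q ^ 2 - q + 1)%N -> subline_poly M != 0.
Proof.
move=> uM card_meet; apply/eqP => p0.
have coef0 i : [:: ftheta (M 0 0) (M 0 1); polar1 (M 0 0) (M 0 1) (M 1 0) (M 1 1) 1;
    polar2 (M 0 0) (M 0 1) (M 1 0) (M 1 1) 1; ftheta (M 1 0) (M 1 1)]`_i = 0.
  by rewrite -coef_Poly -/(subline_poly M) p0 coef0.
move: (coef0 0%N) (coef0 1%N) (coef0 2%N) (coef0 3%N) => /= c0 c1 c2 c3.
set Z := zeros (fun t => polar1 (M 0 0) (M 0 1) (M 1 0) (M 1 1) t
                        + polar2 (M 0 0) (M 0 1) (M 1 0) (M 1 1) (t * frob t))%R.
have preim : pgl_act M @^-1: meetO1 q f = None |: (Some @: Z).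
  apply/setP => -[t|]; rewrite [_ \in _ @^-1: _]inE meetO1_pgl_act // !homM in_setU1 /=.
    rewrite (mem_imset _ _ (@Some_inj _)) inE ftheta_expand.
    by rewrite c0 c3 mulr0 addr0 add0r.
  by rewrite c3 eqxx.
have card_meetZ : #|meetO1 q f| = (1 + #|Z|)%N.
  have None_notin : None \notin Some @: Z by apply/imsetP => -[].
  rewrite -(card_preimset _ (can_inj (pgl_actK uM))) preim cardsU1 None_notin.
  by rewrite card_imset //; exact: Some_inj.
have := card_zeros_quadratic_ge (polar1_Fq_linear _ _ _ _) (polar2_Fq_linear _ _ _ _) c1 c2.
rewrite -/Z; move/eqP: card_meetZ; rewrite card_meet addnC eqn_add2l => /eqP <-.
by rewrite leqNgt ltn_subrL expn_gt0 !(ltnW q_gt1).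
Qed.
End Hyperplane.
End Frobenius.

Unset Implicit Arguments.
Theorem mainTheorem7 (F : finFieldType) (q : nat)
  (hq_pp : exists p k : nat, [/\ prime p, (0 < k)%N & q = (p ^ k)%N])
  (hF : #|F| = (q ^ 3)%N) (hq4 : (4 <= q)%N)
  (f : 'rV[F]_8 -> F) (hH : hyperplane_functional q f)
  (hmeet : #|meetO1 q f| = (q ^ 2 - q + 1)%N) :
  forall M : 'M[F]_2, M \in unitmx ->
    (#|subline q M :&: meetO1 q f| <= 3)%N.
Proof.
move=> M uM; have q_gt1 : (1 < q)%N by apply: leq_trans hq4.
have [p [k [p_prime _ qE]]] := hq_pp.
have exprDq : forall x y : F, (x + y) ^+ q = x ^+ q + y ^+ q.
  by rewrite qE; apply: (exprD_prime_power _ p_prime); rewrite hF qE -expnM.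
apply: leq_trans (card_subline_meetO1_le hF q_gt1 exprDq hH uM) _.
exact: card_proj_roots (subline_poly_neq0 hF q_gt1 exprDq hH uM hmeet) (size_Poly _).
Qed.
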